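(* Let $\tilde{A}\in\mathbb{Q}^{q\times n}$, $\tilde{b}\in\mathbb{Q}^q$ be the constraint data of the LP relaxation $P=\{x:\tilde{A}x\ge\tilde{b}\}=\{x:Ax\ge b,\ x\ge 0,\ x_j\le 1,\ j=1,\dots,p\}$ ($q=m+n+p$, $Q=\{1,\dots,q\}$), let $\bar{x}\in P$, and let $T$ be a finite index set with $D^t\in\mathbb{Q}^{r\times n}$, $d_0^t\in\mathbb{Q}^r$ for $t\in T$. Let $\bar{w}=(\bar{\alpha},\bar{\beta},\{\bar{u}^t,\bar{v}^t\}_{t\in T})$ be a basic optimal solution of the CGLP (minimize $\alpha\bar{x}-\beta$ over the CGLP system) such that the cut separates $\bar{x}$, i.e. $\bar{\alpha}\bar{x}<\bar{\beta}$. Let $(\check{\theta},\check{\delta},\{\check{u}^t,\check{v}^t\}_{t\in T})$ be an optimal solution of the RCV-MILP for the cut $\bar{\alpha}x\ge\bar{\beta}$. Then the cut $\bar{\alpha}x\ge\bar{\beta}$ is not strictly irregular if and only if $\check{\theta}>0$.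
   Context: The CGLP system consists of variables $\alpha\in\mathbb{R}^n$, $\beta\in\mathbb{R}$, $u^t\in\mathbb{R}^q$, $v^t\in\mathbb{R}^r$ ($t\in T$) and constraints: $\alpha-u^t\tilde{A}-v^tD^t=0$ and $\beta-u^t\tilde{b}-v^td_0^t=0$ for all $t\in T$; $\sum_{t\in T}\sum_{i=1}^q u^t_i+\sum_{t\in T}\sum_{i=1}^r v^t_i=1$; $u^t,v^t\ge 0$ for all $t\in T$. For a feasible solution with multipliers $u$, let $N(u)=\{j\in Q: u^t_j>0\text{ for some } t\in T\}$ and let $\tilde{A}_N$ denote the submatrix of $\tilde{A}$ with rows indexed by $N$. A feasible solution of the CGLP system (basic or not) is called extended regular if $\tilde{A}_{N(u)}$ has full row rank. A cut $\alpha x\ge\beta$ is strictly irregular if there is no extended regular feasible CGLP solution whose $(\alpha,\beta)$-component equals $(\alpha,\beta)$ up to a positive scalar multiple. The RCV-MILP for the cut $\bar{\alpha}x\ge\bar{\beta}$ has variables $\theta\in[0,1]$, $\delta_j\in\{0,1\}$ ($j\in Q$), $u^t\in\mathbb{R}^q$, $v^t\in\mathbb{R}^r$ ($t\in T$), and is: maximize $\theta$ subject to $\theta\bar{\alpha}-u^t\tilde{A}-v^tD^t=0$ and $\theta\bar{\beta}-u^t\tilde{b}-v^td_0^t=0$ for all $t\in T$; $\delta_j-u^t_j\ge 0$ for all $j\in Q$, $t\in T$; $\sum_{j\in Q}\delta_j\le n$; $\sum_{j\in N}\delta_j\le\operatorname{rank}(\tilde{A}_N)$ for every subset $N\subseteq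 Q$; $u^t,v^t\ge 0$ for all $t\in T$. *)

From HB Require Import structures.
From mathcomp Require Import all_boot all_order all_algebra.
From mathcomp Require Import reals.
Set Implicit Arguments. Unset Strict Implicit. Unset Printing Implicit Defensive.
Import Order.TTheory GRing.Theory Num.Theory.
Local Open Scope ring_scope.

(* ---- The LP relaxation data  P = {x : Ax >= b, x >= 0, x_j <= 1 (j < p)}
        written as  Atil x >= btil  with q = m + n + p rows:
        rows of A, then the n rows of the identity (x >= 0), then the
        p rows -e_j (-x_j >= -1).                                        *)
Definition Atil (m n p : nat) (A : 'M[rat]_(m, n)) : 'M[rat]_(m + (n + p), n) :=
  col_mx A (col_mx 1%:M (- \matrix_(i < p, j < n) (if (i : nat) == j then 1 else 0))).

Definition btil (m n p : nat) (b : 'cV[rat]_m) : 'cV[rat]_(m + (n + p)) :=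
  col_mx b (col_mx (0 : 'cV[rat]_n) (- const_mx 1)).

Section CGLP.
Variable R : realFieldType.
Variables (q n r : nat) (T : finType).
Variables (At : 'M[R]_(q, n)) (bt : 'cV[R]_q).
Variables (D : T -> 'M[R]_(r, n)) (d0 : T -> 'cV[R]_r).

Definition subrows (N : {set 'I_q}) : 'M[R]_(#|N|, n) :=
  rowsub (fun i : 'I_#|N| => enum_val i) At.

Definition cglp_feasible (alpha : 'rV[R]_n) (beta : R)
    (u : T -> 'rV[R]_q) (v : T -> 'rV[R]_r) : Prop :=
  [/\ (forall t, alpha - u t *m At - v t *m D t = 0),
      (forall t, beta%:M - u t *m bt - v t *m d0 t = 0),
      \sum_(t : T) \sum_(i < q) u t 0 i + \sum_(t : T) \sum_(i < r) v t 0 i = 1,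
      (forall t i, 0 <= u t 0 i) &
      (forall t i, 0 <= v t 0 i)].

Definition cglp_obj (xbar : 'cV[R]_n) (alpha : 'rV[R]_n) (beta : R) : R :=
  (alpha *m xbar) 0 0 - beta.

(* Basic solution = extreme point (vertex) of the CGLP feasible region. *)
Definition cglp_basic alpha beta u v : Prop :=
  cglp_feasible alpha beta u v /\
  forall (lam : R) alpha1 beta1 u1 v1 alpha2 beta2 u2 v2,
    0 < lam < 1 ->
    cglp_feasible alpha1 beta1 u1 v1 -> cglp_feasible alpha2 beta2 u2 v2 ->
    alpha = lam *: alpha1 + (1 - lam) *: alpha2 ->
    beta = lam * beta1 + (1 - lam) * beta2 ->
    (forall t, u t = lam *: u1 t + (1 - lam) *: u2 t) ->
    (forall t, v t = lam *: v1 t + (1 - lam) *: v2 t) ->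
    [/\ alpha1 = alpha2, beta1 = beta2, u1 = u2 & v1 = v2].

Definition cglp_basic_optimal xbar alpha beta u v : Prop :=
  cglp_basic alpha beta u v /\
  forall alpha' beta' u' v', cglp_feasible alpha' beta' u' v' ->
    cglp_obj xbar alpha beta <= cglp_obj xbar alpha' beta'.

Definition Nset (u : T -> 'rV[R]_q) : {set 'I_q} :=
  [set j | [exists t, 0 < u t 0 j]].

Definition extended_regular alpha beta u v : Prop :=
  cglp_feasible alpha beta u v /\ row_free (subrows (Nset u)).

Definition strictly_irregular (abar : 'rV[R]_n) (bbar : R) : Prop :=
  ~ exists (alpha : 'rV[R]_n) (beta : R) (u : T -> 'rV[R]_q)
      (v : T -> 'rV[R]_r) (lam : R),
      [/\ extended_regular alpha beta u v, 0 < lam,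
          alpha = lam *: abar & beta = lam * bbar].

Definition rcv_feasible (abar : 'rV[R]_n) (bbar : R) (theta : R)
    (delta : 'I_q -> R) (u : T -> 'rV[R]_q) (v : T -> 'rV[R]_r) : Prop :=
  [/\ 0 <= theta <= 1,
      (forall j, delta j = 0 \/ delta j = 1),
      (forall t, theta *: abar - u t *m At - v t *m D t = 0),
      (forall t, (theta * bbar)%:M - u t *m bt - v t *m d0 t = 0) &
      (forall j t, 0 <= delta j - u t 0 j)] /\
  [/\ 
\sum_(j < q) delta j <= n%:R,
      (forall N : {set 'I_q}, \sum_(j in N) delta j <= (\rank (subrows N))%:R),
      (forall t i, 0 <= u t 0 i) &
      (forall t i, 0 <= v t 0 i)].

Definition rcv_optimal abar bbar theta delta u v : Prop :=
  rcv_feasible abar bbar theta delta u v /\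
  forall theta' delta' u' v', rcv_feasible abar bbar theta' delta' u' v' ->
    theta' <= theta.

End CGLP.

From HB Require Import structures.
From mathcomp Require Import all_boot all_order all_algebra.
From mathcomp Require Import reals.
From Stdlib Require Import Classical_Prop.
Import Order.TTheory GRing.Theory Num.Theory.
Local Open Scope ring_scope.
Set Implicit Arguments. Unset Strict Implicit. Unset Printing Implicit Defensive.

(** Both directions are rescalings between the CGLP and the RCV-MILP, whose
  equality constraints are homogeneous in (θ, u, v).  A solution of the
  RCV-MILP with θ > 0 has nonzero multipliers (the cut is nontrivial), so
  dividing by their total mass gives a CGLP solution for a positive multiple
  of the cut; the binaries δ dominate u, hence equal 1 on N(u), and the rank
  constraint for N = N(u) says that Ã_N has full row rank.  Conversely an
  extended regular solution (λ ᾱ, λ β̄, u, v) divided by 1 + λ, together with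
  the indicator δ of N(u), is RCV-feasible with θ = λ / (1 + λ) > 0; the rank
  constraints hold because rows indexed by a subset of N(u) stay independent. *)

Lemma row_free_rowsub (F : fieldType) k m n (g : 'I_k -> 'I_m) (B : 'M[F]_(m, n)) :
  injective g -> row_free B -> row_free (rowsub g B).
Proof.
move=> gI /row_freeP [C hC]; apply/row_freeP; exists (C *m colsub g 1%:M).
rewrite mulmxA mul_rowsub_mx hC mul_rowsub_mx mul1mx.
by apply/matrixP => i j; rewrite !mxE (inj_eq gI).
Qed.

Section Subrows.
Variables (R : realFieldType) (q n : nat) (At : 'M[R]_(q, n)).

Lemma subrows_subset (N1 N2 : {set 'I_q}) : N1 \subset N2 ->
  exists2 g : 'I_#|N1| -> 'I_#|N2|,
    injective g & subrows At N1 = rowsub g (subrows At N2).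
Proof.
move=> sN12; have inN2 (i : 'I_#|N1|) : enum_val i \in N2.
  exact/(subsetP sN12)/enum_valP.
pose g i := enum_rank_in (inN2 i) (enum_val i).
have gK i : enum_val (g i) = enum_val i by rewrite enum_rankK_in.
exists g => [i j /(congr1 enum_val)|]; first by rewrite !gK => /enum_val_inj.
by apply/matrixP => i j; rewrite !mxE gK.
Qed.

Lemma row_free_subrowsS (N1 N2 : {set 'I_q}) : N1 \subset N2 ->
  row_free (subrows At N2) -> row_free (subrows At N1).
Proof. by case/subrows_subset => g gI ->; apply: row_free_rowsub. Qed.

Lemma subrows_subS (N1 N2 : {set 'I_q}) : N1 \subset N2 ->
  (subrows At N1 <= subrows At N2)%MS.
Proof. by case/subrows_subset => g _ ->; apply: rowsub_sub. Qed.

Lemma card_le_rank_subrows (N N' : {set 'I_q}) : row_free (subrows At N) ->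
  (#|N' :&: N| <= \rank (subrows At N'))%N.
Proof.
move=> freeN; have /eqP <- := row_free_subrowsS (subsetIr N' N) freeN.
exact/mxrankS/subrows_subS/subsetIl.
Qed.

End Subrows.

Lemma ler_term_sum (R : numDomainType) (I : finType) (F : I -> R) i :
  (forall j, 0 <= F j) -> F i <= \sum_j F j.
Proof. by move=> F_ge0; rewrite (bigD1 i) //= lerDl sumr_ge0. Qed.

Section Multipliers.
Variables (R : realFieldType) (T : finType).

Lemma sum_rows_ge0 k (w : T -> 'rV[R]_k) :
  (forall t i, 0 <= w t 0 i) -> 0 <= \sum_t \sum_(i < k) w t 0 i.
Proof. by move=> w_ge0; rewrite sumr_ge0 // => t _; rewrite sumr_ge0. Qed.

Lemma entry_le_sum_rows k (w : T -> 'rV[R]_k) t i :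
  (forall t i, 0 <= w t 0 i) -> w t 0 i <= \sum_t \sum_(i < k) w t 0 i.
Proof.
move=> w_ge0; apply: le_trans (ler_term_sum i (w_ge0 t)) _.
by apply: ler_term_sum => s; apply: sumr_ge0.
Qed.

Lemma sum_rows_eq0 k (w : T -> 'rV[R]_k) t :
  (forall t i, 0 <= w t 0 i) -> \sum_t \sum_(i < k) w t 0 i = 0 -> w t = 0.
Proof.
move=> w_ge0 sum0; have row0 : \sum_(i < k) w t 0 i = 0.
  by apply: (psumr_eq0P _ sum0) => // s _; apply: sumr_ge0.
by apply/rowP => i; rewrite mxE (psumr_eq0P _ row0).
Qed.

Lemma sum_rowsZ k c (w : T -> 'rV[R]_k) :
  \sum_t \sum_(i < k) (c *: w t) 0 i = c * \sum_t \sum_(i < k) w t 0 i.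
Proof.
rewrite mulr_sumr; apply: eq_bigr => t _.
by rewrite mulr_sumr; apply: eq_bigr => i _; rewrite mxE.
Qed.

End Multipliers.

Lemma sum_indicator (R : numDomainType) (I : finType) (N N' : {set I}) :
  \sum_(j in N') (if j \in N then 1 else 0 : R) = #|N' :&: N|%:R.
Proof.
rewrite -big_mkcondr /= (eq_bigl [in N' :&: N]) ?sumr_const // => j.
by rewrite !inE.
Qed.

Section CutCertificates.
Variables (R : realFieldType) (q n r : nat) (T : finType).
Variables (At : 'M[R]_(q, n)) (bt : 'cV[R]_q).
Variables (D : T -> 'M[R]_(r, n)) (d0 : T -> 'cV[R]_r).

Definition certifies (alpha : 'rV[R]_n) (beta : R)
    (u : T -> 'rV[R]_q) (v : T -> 'rV[R]_r) : Prop :=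
  (forall t, alpha - u t *m At - v t *m D t = 0) /\
  (forall t, beta%:M - u t *m bt - v t *m d0 t = 0).

Lemma certifiesZ c alpha beta u v : certifies alpha beta u v ->
  certifies (c *: alpha) (c * beta) (fun t => c *: u t) (fun t => c *: v t).
Proof.
case=> hA hb; split=> t; last rewrite -scale_scalar_mx.
all: by rewrite -!scalemxAl -!scalerBr ?hA ?hb scaler0.
Qed.

Lemma Nset_scale c (u : T -> 'rV[R]_q) :
  0 < c -> Nset (fun t => c *: u t) = Nset u.
Proof.
move=> c_gt0; apply/setP => j; rewrite !inE; apply: eq_existsb => t.
by rewrite mxE pmulr_rgt0.
Qed.

Lemma cglp_feasible_card_gt0 alpha beta u v :
  cglp_feasible At bt D d0 alpha beta u v -> (0 < #|T|)%N.
Proof.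
case=> _ _ + _ _; rewrite lt0n; apply: contraPN => /eqP/card0_eq T0.
by rewrite !big_pred0 // addr0 => /esym/eqP; rewrite oner_eq0.
Qed.

Section RCVSolution.
Variables (abar : 'rV[R]_n) (bbar : R).
Variables (theta : R) (delta : 'I_q -> R).
Variables (u : T -> 'rV[R]_q) (v : T -> 'rV[R]_r).
Hypothesis rcv : rcv_feasible At bt D d0 abar bbar theta delta u v.

Lemma rcv_certifies : certifies (theta *: abar) (theta * bbar) u v.
Proof. by case: rcv => -[]. Qed.

Lemma rcv_row_free_Nset : row_free (subrows At (Nset u)).
Proof.
case: rcv => -[_ delta01 _ _ delta_ge_u] [_ rank_bound _ _].
have deltaN j : j \in Nset u -> delta j = 1.
  rewrite inE => /existsP [t u_gt0]; case: (delta01 j) => // delta0.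
  by move: (delta_ge_u j t); rewrite delta0 sub0r oppr_ge0 leNgt u_gt0.
have := rank_bound (Nset u); rewrite (eq_bigr (fun=> 1)) // sumr_const ler_nat.
by rewrite /row_free eqn_leq rank_leq_row.
Qed.

Lemma rcv_mass_gt0 : (0 < #|T|)%N -> 0 < theta ->
  (abar != 0) || (bbar != 0) ->
  0 < \sum_t \sum_(i < q) u t 0 i + \sum_t \sum_(i < r) v t 0 i.
Proof.
case/card_gt0P => t0 _ theta_gt0; apply: contraTT; rewrite -leNgt.
case: rcv => _ [_ _ u_ge0 v_ge0].
rewrite le_eqVlt ltNge addr_ge0 ?sum_rows_ge0 // orbF.
rewrite paddr_eq0 ?sum_rows_ge0 // => /andP [/eqP usum0 /eqP vsum0].
have u0 := sum_rows_eq0 t0 u_ge0 usum0; have v0 := sum_rows_eq0 t0 v_ge0 vsum0.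
have [hA hb] := rcv_certifies.
have /eqP := hA t0; rewrite u0 v0 !mul0mx !subr0 scaler_eq0 (gt_eqF theta_gt0).
have /eqP := hb t0; rewrite u0 v0 !mul0mx !subr0 -scalemx1 scaler_eq0 oner_eq0.
by rewrite orbF mulf_eq0 (gt_eqF theta_gt0) /= => -> ->.
Qed.

Lemma rcv_not_strictly_irregular : (0 < #|T|)%N -> 0 < theta ->
  (abar != 0) || (bbar != 0) -> ~ strictly_irregular At bt D d0 abar bbar.
Proof.
move=> T_gt0 theta_gt0 cut_nz; apply; case: rcv => _ [_ _ u_ge0 v_ge0].
have := rcv_mass_gt0 T_gt0 theta_gt0 cut_nz; set s := _ + _ => s_gt0.
have [hA hb] := certifiesZ s^-1 rcv_certifies.
rewrite scalerA in hA; rewrite mulrA in hb.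
exists ((s^-1 * theta) *: abar), (s^-1 * theta * bbar),
  (fun t => s^-1 *: u t), (fun t => s^-1 *: v t), (s^-1 * theta).
split; rewrite ?mulr_gt0 ?invr_gt0 //; split; last first.
  by rewrite Nset_scale ?invr_gt0 //; apply: rcv_row_free_Nset.
split => // [|t i|t i];
  rewrite ?mxE ?mulr_ge0 ?invr_ge0 ?u_ge0 ?v_ge0 ?(ltW s_gt0) //.
by rewrite !sum_rowsZ -mulrDr mulVf ?gt_eqF.
Qed.

End RCVSolution.

Section ExtendedRegular.
Variables (abar : 'rV[R]_n) (bbar : R) (lam : R).
Variables (u : T -> 'rV[R]_q) (v : T -> 'rV[R]_r).
Hypotheses (lam_gt0 : 0 < lam)
  (reg : extended_regular At bt D d0 (lam *: abar) (lam * bbar) u v).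

Lemma extended_regular_rcv_feasible :
  rcv_feasible At bt D d0 abar bbar ((1 + lam)^-1 * lam)
    (fun j => if j \in Nset u then 1 else 0)
    (fun t => (1 + lam)^-1 *: u t) (fun t => (1 + lam)^-1 *: v t).
Proof.
set c := (1 + lam)^-1.
case: reg => -[hA hb mass1 u_ge0 v_ge0] freeN.
have c_gt0 : 0 < c by rewrite invr_gt0 addr_gt0.
have c_le1 : c <= 1 by rewrite invf_le1 ?addr_gt0 // lerDl ltW.
have [hcA hcb] := certifiesZ c (conj hA hb : certifies _ _ u v).
have u_le1 t j : u t 0 j <= 1.
  apply: le_trans (entry_le_sum_rows _ _ u_ge0) _.
  by rewrite -mass1 lerDl sum_rows_ge0.
rewrite scalerA in hcA; rewrite mulrA in hcb; split; split => //.
- rewrite mulr_ge0 ?(ltW c_gt0) ?(ltW lam_gt0) //= ler_pdivrMl ?addr_gt0 // mulr1.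
  by rewrite lerDr ler01.
- by move=> j; case: (j \in Nset u); [right | left].
- move=> j t; rewrite mxE; case: ifPn => [_|uN].
    by rewrite subr_ge0 mulr_ile1 ?(ltW c_gt0).
  suff -> : u t 0 j = 0 by rewrite mulr0 subr0.
  apply/eqP; rewrite eq_le u_ge0 andbT leNgt; apply: contra uN => u_gt0.
  by rewrite inE; apply/existsP; exists t.
- rewrite -big_mkcond sumr_const ler_nat -(eqP freeN); exact: rank_leq_col.
- by move=> N'; rewrite sum_indicator ler_nat card_le_rank_subrows.
- by move=> t i; rewrite mxE mulr_ge0 ?(ltW c_gt0).
- by move=> t i; rewrite mxE mulr_ge0 ?(ltW c_gt0).
Qed.

End ExtendedRegular.

Lemma not_strictly_irregular_iff abar bbar thc dc uc vc :
  (0 < #|T|)%N -> (abar != 0) || (bbar != 0) ->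
  rcv_optimal At bt D d0 abar bbar thc dc uc vc ->
  ~ strictly_irregular At bt D d0 abar bbar <-> 0 < thc.
Proof.
move=> T_gt0 cut_nz [rcv thc_max]; split; last first.
  by move=> thc_gt0; apply: rcv_not_strictly_irregular rcv T_gt0 thc_gt0 cut_nz.
move/NNPP => [alpha [beta [u [v [lam [reg lam_gt0 alphaE betaE]]]]]].
rewrite {}alphaE {}betaE in reg.
apply: lt_le_trans (thc_max _ _ _ _ (extended_regular_rcv_feasible lam_gt0 reg)).
by rewrite mulr_gt0 ?invr_gt0 ?addr_gt0.
Qed.

End CutCertificates.

Theorem theorem4 (R : realType) (m n p r : nat) (T : finType)
    (A : 'M[rat]_(m, n)) (b : 'cV[rat]_m) (hp : (p <= n)%N)
    (D : T -> 'M[rat]_(r, n)) (d0 : T -> 'cV[rat]_r)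
    (xbar : 'cV[R]_n)
    (hxbar : forall i, (map_mx ratr (btil n p b) : 'cV[R]_(m + (n + p))) i 0
                       <= (map_mx ratr (Atil p A) *m xbar) i 0)
    (abar : 'rV[R]_n) (bbar : R)
    (ubar : T -> 'rV[R]_(m + (n + p))) (vbar : T -> 'rV[R]_r)
    (hopt : cglp_basic_optimal (map_mx ratr (Atil p A)) (map_mx ratr (btil n p b))
              (fun t => map_mx ratr (D t)) (fun t => map_mx ratr (d0 t))
              xbar abar bbar ubar vbar)
    (hsep : (abar *m xbar) 0 0 < bbar)
    (thc : R) (dc : 'I_(m + (n + p)) -> R)
    (uc : T -> 'rV[R]_(m + (n + p))) (vc : T -> 'rV[R]_r)
    (hrcv : rcv_optimal (map_mx ratr (Atil p A)) (map_mx ratr (btil n p b))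
              (fun t => map_mx ratr (D t)) (fun t => map_mx ratr (d0 t))
              abar bbar thc dc uc vc) :
  ~ strictly_irregular (map_mx ratr (Atil p A)) (map_mx ratr (btil n p b))
      (fun t => map_mx ratr (D t)) (fun t => map_mx ratr (d0 t)) abar bbar
  <-> 0 < thc.
Proof.
apply: not_strictly_irregular_iff hrcv.
- by case: hopt => -[+ _] _; apply: cglp_feasible_card_gt0.
- rewrite -negb_and; apply: contraTN hsep => /andP [/eqP -> /eqP ->].
  by rewrite mul0mx mxE ltxx.
Qed.
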